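(* In every $n$-resource selection game $G$, the set $D_G$ is nonempty, $P_G\ne\emptyset$, and $h_G\in\mathbb{R}$ is well defined.
   Context: An $n$-resource selection game is $G=\bigl((f_j)_{j=1}^n;(\mu^{R})_{\emptyset\ne R\subseteq[n]}\bigr)$ with each $f_j:[0,\infty)\to\mathbb{R}$ nondecreasing and each $\mu^R\ge0$. For nondecreasing $g_1,\ldots,g_m:[0,\infty)\to\mathbb{R}\cup\{\mathrm{undefined}\}$, $\mathrm{eq}(g_1,\ldots,g_m)(\mu)$ equals $g_1(\mu_1)$ if there exist $\mu_1,\ldots,\mu_m\ge0$ with $\sum\mu_j=\mu$ and $g_1(\mu_1)=\cdots=g_m(\mu_m)\in\mathbb{R}$, and $\mathrm{undefined}$ otherwise (well defined). For nonempty $S\subseteq[n]$: $E_G(S)=\mathrm{eq}(f_k:k\in S)\bigl(\sum_{\emptyset\ne R\subseteq S}\mu^R\bigr)$; $M_G(S)$ is the set of nonempty $S'\subseteq S$ such that for every $0\le\mu\le\sum_{R\subseteq S,\,R\cap S'\ne\emptyset}\mu^R$, $\mathrm{eq}(f_k:k\in S')(\mu)\ne E_G(S)$ (where $\mathrm{undefined}$ counts as different from every real); $D_G=\{S:\ E_G(S)\in\mathbb{R}\text{ and }M_G(S)=\emptyset\}$; $h_G=\max_{S\in D_G}E_G(S)$; $P_G=\bigcup\{S\in D_G: E_G(S)=h_G\}$. *)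

From mathcomp Require Import all_boot.
From Stdlib Require Import Reals ClassicalEpsilon.

Set Implicit Arguments.
Unset Strict Implicit.
Unset Printing Implicit Defensive.

Local Open Scope R_scope.

(* An n-resource selection game: cost functions f_j (only their values on
   [0,oo) matter) and masses mu^R indexed by subsets R of [n] = 'I_n
   (mu set0 is never used). *)
Record game (n : nat) := Game {
  cost : 'I_n -> R -> R;
  mass : {set 'I_n} -> R
}.

Definition valid_game n (G : game n) : Prop :=
  (forall j x y, 0 <= x -> x <= y -> cost G j x <= cost G j y) /\
  (forall Rs : {set 'I_n}, Rs != set0 -> 0 <= mass G Rs).

Definition eq_at n (f : 'I_n -> R -> R) (S : {set 'I_n}) (mu c : R) : Prop :=
  exists x : 'I_n -> R,
    (forall k, k \in S -> 0 <= x k) /\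
    \big[Rplus/0]_(k in S) x k = mu /\
    (forall k, k \in S -> f k (x k) = c).

(* eq as a partial function: Some c, or None for "undefined"
   (well defined, as stated in the paper). *)
Definition eqf n (f : 'I_n -> R -> R) (S : {set 'I_n}) (mu : R) : option R :=
  match excluded_middle_informative (exists c, eq_at f S mu c) with
  | left h => Some (proj1_sig (constructive_indefinite_description _ h))
  | right _ => None
  end.

Definition total_mass n (G : game n) (S : {set 'I_n}) : R :=
  \big[Rplus/0]_(Rs : {set 'I_n} | (Rs != set0) && (Rs \subset S)) mass G Rs.

Definition meet_mass n (G : game n) (S S' : {set 'I_n}) : R :=
  \big[Rplus/0]_(Rs : {set 'I_n} | (Rs \subset S) && (Rs :&: S' != set0)) mass G Rs.

Definition E_G n (G : game n) (S : {set 'I_n}) : option R :=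
  eqf (cost G) S (total_mass G S).

Definition in_M_G n (G : game n) (S S' : {set 'I_n}) : Prop :=
  S' != set0 /\ S' \subset S /\
  forall mu, 0 <= mu -> mu <= meet_mass G S S' ->
    eqf (cost G) S' mu <> E_G G S.

Definition in_D_G n (G : game n) (S : {set 'I_n}) : Prop :=
  S != set0 /\ (exists e, E_G G S = Some e) /\ (forall S', ~ in_M_G G S S').

Definition is_h_G n (G : game n) (h : R) : Prop :=
  (exists S, in_D_G G S /\ E_G G S = Some h) /\
  (forall S e, in_D_G G S -> E_G G S = Some e -> e <= h).

Definition in_P_G n (G : game n) (h : R) (j : 'I_n) : Prop :=
  exists S, in_D_G G S /\ E_G G S = Some h /\ j \in S.

(* Every singleton {j} lies in D_G: its only nonempty subset is {j} itself, and
   taking mu to be the whole mass of {j} in the definition of M_G({j}) gives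
   eq(f_j)(mu) = E_G({j}).  Since [n] has finitely many subsets, E_G then attains
   a maximum h_G on the nonempty family D_G, and any set realising it is a
   nonempty subset of P_G. *)
From mathcomp Require Import all_boot.
From Stdlib Require Import Reals Classical ClassicalEpsilon.

Local Open Scope R_scope.

Lemma seq_argmax (T : eqType) (P : T -> Prop) (v : T -> R) (s : seq T) :
  (exists2 x, x \in s & P x) ->
  exists x, [/\ x \in s, P x & forall y, y \in s -> P y -> v y <= v x].
Proof.
elim: s => [[x //]|a s IHs] [x xas Px].
have [[m [ms Pm m_max]]|no_Ps] :=
  classic (exists x, [/\ x \in s, P x & forall y, y \in s -> P y -> v y <= v x]).
- have [[Pa lt_ma]|not_a] := classic (P a /\ v m < v a).
  + exists a; split=> [||y]; rewrite ?mem_head // inE => /orP[/eqP->|ys] Py.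
      exact: Rle_refl.
    exact: Rle_trans (m_max y ys Py) (Rlt_le _ _ lt_ma).
  + exists m; split=> [||y]; rewrite ?inE ?ms ?orbT // => /orP[/eqP->|ys] Py.
      by apply: Rnot_lt_le => lt_ma; apply: not_a.
    exact: m_max.
- have {}no_Ps y : y \in s -> ~ P y.
    by move=> ys Py; apply: no_Ps; apply: IHs; exists y.
  have Pa : P a by move: xas; rewrite inE => /orP[/eqP<-|/no_Ps].
  exists a; split=> [||y]; rewrite ?mem_head // inE => /orP[/eqP->|/no_Ps] // _.
  exact: Rle_refl.
Qed.

Lemma finType_argmax (T : finType) (P : T -> Prop) (v : T -> R) :
  (exists x, P x) -> exists x, P x /\ forall y, P y -> v y <= v x.
Proof.
move=> [x Px]; have [|m [_ Pm m_max]] := @seq_argmax T P v (enum T).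
  by exists x; rewrite ?mem_enum.
by exists m; split=> // y; apply: m_max; rewrite mem_enum.
Qed.

Lemma eqf_defined n (f : 'I_n -> R -> R) S mu c :
  eq_at f S mu c -> exists e, eqf f S mu = Some e.
Proof.
rewrite /eqf; case: excluded_middle_informative => [|no_c] ex_c; first by eexists.
by case: no_c; exists c.
Qed.

Lemma eq_at_set1 n (f : 'I_n -> R -> R) j mu :
  0 <= mu -> eq_at f [set j] mu (f j mu).
Proof.
move=> mu_ge0; exists (fun _ => mu); split=> [k _ //|]; split.
  by rewrite big_set1E Rplus_0_r.
by move=> k; rewrite inE => /eqP->.
Qed.

Lemma total_mass_ge0 n (G : game n) S : valid_game G -> 0 <= total_mass G S.
Proof.
move=> [_ mass_ge0]; apply: (big_ind (fun x => 0 <= x)) => [||Rs /andP[Rs0 _]].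
- exact: Rle_refl.
- exact: Rplus_le_le_0_compat.
- exact: mass_ge0.
Qed.

Lemma meet_mass_self n (G : game n) S : meet_mass G S S = total_mass G S.
Proof.
apply: eq_bigl => Rs; rewrite andbC.
by case RsS: (Rs \subset S); rewrite ?(setIidPl RsS) ?andbF.
Qed.

Lemma set1_in_D_G n (G : game n) j : valid_game G -> in_D_G G [set j].
Proof.
move=> VG; have mass_ge0 := @total_mass_ge0 _ G [set j] VG.
split; first by apply/set0Pn; exists j; rewrite set11.
split; first exact/eqf_defined/eq_at_set1.
move=> S' [S'0 [S'j not_E]].
have S'_eq : S' = [set j].
  by move: S'j; rewrite subset1 => /orP[/eqP//|/eqP S'_0]; rewrite S'_0 eqxx in S'0.
rewrite S'_eq meet_mass_self in not_E.
exact: (not_E _ mass_ge0 (Rle_refl _)).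
Qed.

(* Reals rebinds the %N key, so [(0 < n)%N] must not be parsed in R_scope. *)
Local Close Scope R_scope.

Theorem mainTheorem13 (n : nat) (G : game n) :
  (0 < n)%N -> valid_game G ->
  (exists S, in_D_G G S) /\
  (exists h : R, is_h_G G h /\ exists j, in_P_G G h j).
Proof.
move=> n_gt0 VG.
have D_set1 := @set1_in_D_G _ G (Ordinal n_gt0) VG.
split; first by exists [set Ordinal n_gt0].
pose value S := if E_G G S is Some e then e else 0%R.
have [S [DS S_max]] := @finType_argmax _ (in_D_G G) value (ex_intro _ _ D_set1).
have [S0 [[h ES] _]] := DS.
exists h; split; first split.
- by exists S.
- by move=> S' e DS' ES'; have := S_max S' DS'; rewrite /value ES ES'.
- by have [j jS] := set0Pn _ S0; exists j, S.
Qed.
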